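(* Let $\rho$ be a state of a $d$-dimensional system ($d<\infty$), let $A,B$ be two copies of this system with $\rho_A=\rho_B=\rho$, and let $j\neq0$ be an integer. Let $d^{(j)}:=\dim\mathcal{V}^{(j)}_{\rm in}$, where $\mathcal{V}^{(j)}_{\rm in}:=\mathrm{span}\{|n+j,m\rangle\langle n,m|\}_{n,m}$ (over all $n,m$ with $n,n+j,m\in\{0,\dots,d-1\}$). Then $$\Delta M_A^{(j)}\le\big\|(\rho_A\otimes\rho_B)^{(j)}\big\|_{d^{(j)}\text{-KF}}-\|\rho^{(j)}\|_1.$$
   Context: Local observable $L=\sum_{n=0}^{d-1}n|n\rangle\langle n|$ on each system, $L_{AB}=L\otimes\mathbb{I}+\mathbb{I}\otimes L$. For a single system, $\rho^{(j)}:=\sum_{n}|n+j\rangle\langle n+j|\rho|n\rangle\langle n|$ (terms with $n+j$ out of range omitted). For the bipartite system, the $j$th mode is $X^{(j)}:=\sum_c\Pi_{c+j}X\Pi_c$, with $\Pi_c$ the projector onto the eigenvalue-$c$ eigenspace of $L_{AB}$. $M^{(j)}(\sigma):=\|\sigma^{(j)}\|_1$ (trace norm). $\Delta M_A^{(j)}:=\max_{V_{AB}}M^{(j)}(\sigma_A)-M^{(j)}(\rho)$, with $\sigma_A=\mathrm{tr}_B[V_{AB}(\rho\otimes\rho)V_{AB}^\dagger]$ and the maximum over all unitaries with $[V_{AB},L_{AB}]=0$. For an operator $P$, $\|P\|_{\alpha\text{-KF}}$ is the Ky-Fan $\alpha$-norm, the sum of the $\alpha$ largest singular values of $P$. *)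

From HB Require Import structures.
From mathcomp Require Import all_boot all_order all_algebra.
From mathcomp Require Import complex mxtens.
From mathcomp Require Import boolp classical_sets reals.
From Stdlib Require Import ClassicalEpsilon.
Set Implicit Arguments. Unset Strict Implicit. Unset Printing Implicit Defensive.
Import Order.TTheory GRing.Theory Num.Theory.
Local Open Scope ring_scope.
Local Open Scope complex_scope.

Section QDefs.
Variable R : realType.
Local Notation C := R[i].

Definition adj m n (A : 'M[C]_(m, n)) : 'M[C]_(n, m) := \matrix_(i, j) (A j i)^*.

Definition unitary n (U : 'M[C]_n) : Prop := U *m adj U = 1%:M /\ adj U *m U = 1%:M.

Definition is_state n (rho : 'M[C]_n) : Prop :=
  adj rho = rho /\ (forall v : 'cV[C]_n, 0 <= (adj v *m rho *m v) 0 0) /\ \tr rho = 1.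

Definition is_svd n (P : 'M[C]_n) (s : 'I_n -> R) : Prop :=
  (forall i, 0 <= s i) /\ (forall i k : 'I_n, (i <= k)%N -> s k <= s i) /\
  exists U W : 'M[C]_n, unitary U /\ unitary W /\
     P = U *m diag_mx (\row_i ((s i)%:C)) *m W.

Definition singvals n (P : 'M[C]_n) : 'I_n -> R :=
  epsilon (inhabits (fun _ => 0)) (is_svd P).

Definition kyfan n (alpha : nat) (P : 'M[C]_n) : R :=
  \sum_(i < n | (i < alpha)%N) singvals P i.

Definition trnorm n (P : 'M[C]_n) : R := kyfan n P.

Definition Lop d : 'M[C]_d := diag_mx (\row_(k < d) (k%:R : C)).
Definition LAB d : 'M[C]_(d * d) := Lop d *t 1%:M + 1%:M *t Lop d.

(* j-th mode of a single-system operator: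
   rho^(j) = sum_n |n+j><n+j| rho |n><n| *)
Definition mode1 d (j : int) (rho : 'M[C]_d) : 'M[C]_d :=
  \matrix_(a, b) (if a%:Z == b%:Z + j then rho a b else 0).

(* projector onto the eigenvalue-c eigenspace of L_AB (L_AB is diagonal in the
   product basis |n,m>, with eigenvalue n+m) *)
Definition PiAB d (c : int) : 'M[C]_(d * d) :=
  diag_mx (\row_k (if ((mxtens_unindex k).1 + (mxtens_unindex k).2)%:Z == c
                   then 1 else 0)).

Definition mode2 d (j : int) (X : 'M[C]_(d * d)) : 'M[C]_(d * d) :=
  \sum_(c < (2 * d)%N) PiAB d (c%:Z + j) *m X *m PiAB d c%:Z.

Definition ptrB d (X : 'M[C]_(d * d)) : 'M[C]_d :=
  \matrix_(a, b) \sum_(k < d) X (mxtens_index (a, k)) (mxtens_index (b, k)).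

Definition Mj d (j : int) (sigma : 'M[C]_d) : R := trnorm (mode1 j sigma).

Definition DeltaMA d (j : int) (rho : 'M[C]_d) : R :=
  sup [set x : R | exists V : 'M[C]_(d * d),
         unitary V /\ V *m LAB d = LAB d *m V /\
         x = Mj j (ptrB (V *m (rho *t rho) *m adj V))] - Mj j rho.

(* d^(j) = dim V_in^(j), V_in^(j) = span{ |n+j,m><n,m| } *)
Definition dj d (j : int) : nat :=
  \rank (\sum_(ab : ('I_d * 'I_d) * ('I_d * 'I_d) |
                (ab.1.2 == ab.2.2) && (ab.1.1%:Z == (ab.2.1%:Z + j)%R))
          <<mxvec (delta_mx (mxtens_index ab.1) (mxtens_index ab.2) : 'M[C]_(d * d))>>)%MS.

End QDefs.

From mathcomp Require Import all_boot all_order all_algebra.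
From mathcomp Require Import complex mxtens spectral perm.
From mathcomp Require Import reals.
From mathcomp Require Import ring.
From Stdlib Require Import ClassicalEpsilon.
Set Implicit Arguments. Unset Strict Implicit. Unset Printing Implicit Defensive.
Import Order.TTheory GRing.Theory Num.Theory.
Local Open Scope complex_scope.
Local Open Scope ring_scope.

(* A unitary V commuting with L_AB is block diagonal in the eigenbasis of
   L_AB, so the entries of V (rho (x) rho) V^+ that the partial trace feeds
   into the j-th mode of sigma_A, those at the positions (|n+j,m>, |n,m>),
   are entries of V (rho (x) rho)^(j) V^+.  Write ||sigma_A^(j)||_1 as
   |tr (M sigma_A^(j))| with M unitary and (rho (x) rho)^(j) = U diag(s) W as
   a singular value decomposition: by AM-GM and the unitarity of V U and W V^+
   the trace is at most sum_i s_i c_i, with weights 0 <= c_i <= 1 summing to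
   the number N of such positions.  Hence it is at most the sum of the N
   largest s_i, and N <= d^(j) since the matrix units |n+j,m><n,m| are
   linearly independent.  The singular value decomposition itself comes from
   the spectral decomposition of P^+ P followed by a Gram-Schmidt completion
   of the normalised nonzero columns. *)

Lemma sort_perm_nonincr disp (T : orderType disp) n (f : 'I_n -> T) :
  exists p : 'S_n, forall i k : 'I_n, (i <= k)%N -> (f (p k) <= f (p i))%O.
Proof.
pose geT := fun x y : T => (y <= x)%O.
have geT_tr : transitive geT by move=> a b c /= h1 h2; apply: le_trans h2 h1.
pose t := [tuple f i | i < n].
have /tuple_permP [p sortE] : perm_eq (sort geT t) t by rewrite perm_sort.
exists p => i k ik.
have sorted_t : sorted geT (sort geT t) by apply: sort_sorted => x y; apply: le_total.
have := sorted_leq_nth geT_tr (fun x => lexx x) (f i) sorted_t _ _ _ _ ik.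
rewrite sortE /= !inE size_map size_enum_ord !ltn_ord => /(_ isT isT).
rewrite !(nth_map i) -?enumT ?size_enum_ord ?ltn_ord // !nth_ord_enum.
by rewrite !tnth_map !tnth_ord_tuple.
Qed.

Lemma sum_weighted_le_sum_prefix (K : numDomainType) n (s c : 'I_n -> K) (r : nat) :
  (forall i, 0 <= s i) -> (forall i k : 'I_n, (i <= k)%N -> s k <= s i) ->
  (forall i, 0 <= c i) -> (forall i, c i <= 1) -> \sum_i c i <= r%:R ->
  \sum_i s i * c i <= \sum_(i < n | (i < r)%N) s i.
Proof.
move=> s_ge0 s_nonincr c_ge0 c_le1 sum_c.
have prefixE : \sum_(i < n | (i < r)%N) s i = \sum_i s i * (i < r)%:R.
  by rewrite big_mkcond; apply: eq_bigr => i _; case: ifP; rewrite ?mulr1 ?mulr0.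
rewrite prefixE; case: (ltnP r n) => [lt_rn | le_nr]; last first.
  apply: ler_sum => i _; rewrite (leq_trans (ltn_ord i) le_nr) mulr1.
  by rewrite ler_piMr.
(* exchange argument around the threshold t = s_r: every term of
   \sum_i (s i - t) * ((i < r) - c i) is nonnegative *)
pose t := s (Ordinal lt_rn).
have sum_prefix : \sum_(i < n) ((i < r)%:R : K) = r%:R.
  transitivity (\sum_(i < n | (i < r)%N) (1 : K)).
    by rewrite [RHS]big_mkcond; apply: eq_bigr => i _; case: ifP.
  by rewrite -(big_ord_widen _ (fun _ => 1) (ltnW lt_rn)) sumr_const card_ord.
have threshold_ge0 : 0 <= \sum_(i < n) t * ((i < r)%:R - c i).
  by rewrite -mulr_sumr sumrB sum_prefix mulr_ge0 ?s_ge0 ?subr_ge0.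
rewrite -subr_ge0 -sumrB; apply: le_trans threshold_ge0 _.
apply: ler_sum => i _; rewrite -mulrBr -subr_ge0 -mulrBl.
case: (ltnP i r) => ir.
  by rewrite mulr_ge0 // subr_ge0 // s_nonincr // ltnW.
by rewrite mulr_le0 // ?subr_le0 ?s_nonincr // sub0r oppr_le0.
Qed.

Lemma sum_in_inj_le (K : numDomainType) (I J : finType) (P : pred I) (u : I -> J)
    (f : J -> K) :
  {in P &, injective u} -> (forall x, 0 <= f x) ->
  \sum_(p | P p) f (u p) <= \sum_x f x.
Proof.
move=> u_inj f_ge0; rewrite -(big_imset _ u_inj) /=.
rewrite [X in _ <= X](bigID (mem [set u p | p in P])) /= lerDl.
by apply: sumr_ge0 => x _; apply: f_ge0.
Qed.

Lemma normM_le_mean_sqr (K : numFieldType) (x y : K) :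
  `|x * y| <= (`|x| ^+ 2 + `|y| ^+ 2) / 2%:R.
Proof.
rewrite ler_pdivlMr ?ltr0n // normrM mulr_natr -subr_ge0.
have real_xy : `|x| - `|y| \is Num.real by rewrite rpredB // normr_real.
by rewrite addrAC -sqrrB -(real_normK real_xy) exprn_ge0 ?normr_ge0.
Qed.

Lemma mxrank_sum_delta_ge (F : fieldType) (I : finType) (P : pred I) m
    (f : I -> 'I_m) :
  {in P &, injective f} ->
  (#|P| <= \rank (\sum_(i | P i) <<delta_mx ord0 (f i) : 'rV[F]_m>>)%MS)%N.
Proof.
move=> f_inj.
pose E := \matrix_(k < #|P|) (delta_mx ord0 (f (enum_val k)) : 'rV[F]_m).
have EE : E *m E^T = 1%:M.
  apply/matrixP=> k k'; rewrite !mxE (bigD1 (f (enum_val k))) //= big1 ?addr0.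
    rewrite !mxE !eqxx mul1r (inj_in_eq f_inj) ?enum_valP //.
    by rewrite (inj_eq enum_val_inj) eq_sym.
  by move=> t tk; rewrite !mxE (negbTE tk) mul0r.
have : (#|P| <= \rank E)%N by rewrite -{1}(mxrank1 F #|P|) -EE mxrankM_maxl.
move/leq_trans; apply; apply: mxrankS; apply/row_subP => k; rewrite rowK.
by apply: (sumsmx_sup (enum_val k)); [apply: enum_valP | rewrite genmxE].
Qed.

Section Adjoint.
Variable R : realType.
Local Notation C := R[i].

(* [adj] is written with the conjugation of [complex_scope], which is
   convertible but not syntactically equal to [Num.conj]. *)
Lemma conjcE (x : C) : (x^*)%C = x^*.
Proof. by []. Qed.

Lemma conj_realc (r : R) : (r%:C : C)^* = r%:C.
Proof. exact: conjc_real. Qed.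

Lemma adjE m n (A : 'M[C]_(m, n)) : adj A = map_mx Num.conj A^T.
Proof. by apply/matrixP=> i k; rewrite !mxE. Qed.

Lemma adjK m n (A : 'M[C]_(m, n)) : adj (adj A) = A.
Proof. by apply/matrixP=> i k; rewrite !mxE conjcK. Qed.

Lemma adjM m n p (A : 'M[C]_(m, n)) (B : 'M[C]_(n, p)) :
  adj (A *m B) = adj B *m adj A.
Proof. by rewrite !adjE trmx_mul map_mxM. Qed.

Lemma adj_perm_mx n (s : 'S_n) : adj (perm_mx s : 'M[C]_n) = perm_mx s^-1.
Proof.
rewrite adjE -tr_perm_mx; apply/matrixP=> a b; rewrite !mxE.
by case: (_ == _); rewrite ?conjC1 ?conjC0.
Qed.

Lemma unitaryP n (U : 'M[C]_n) : unitary U <-> U \is unitarymx.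
Proof.
rewrite /unitary adjE; split=> [[UU _]|/unitarymxP UU]; first exact/unitarymxP.
by split=> //; apply: mulmx1C.
Qed.

Lemma unitary_mulmx_adj n (U : 'M[C]_n) : U \is unitarymx -> U *m adj U = 1%:M.
Proof. by move/unitaryP=> []. Qed.

Lemma unitary_adj_mulmx n (U : 'M[C]_n) : U \is unitarymx -> adj U *m U = 1%:M.
Proof. by move/unitaryP=> []. Qed.

Lemma adj_unitarymx n (U : 'M[C]_n) : (adj U \is unitarymx) = (U \is unitarymx).
Proof. by rewrite adjE trmxC_unitary. Qed.

Lemma unitarymx1 n : (1%:M : 'M[C]_n) \is unitarymx.
Proof. by apply/unitarymxP; rewrite trmx1 map_mx1 mulmx1. Qed.

Lemma perm_mx_unitary n (s : 'S_n) : (perm_mx s : 'M[C]_n) \is unitarymx.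
Proof.
by apply/unitarymxP; rewrite -adjE adj_perm_mx -perm_mxM mulgV perm_mx1.
Qed.

Lemma mulmx_adj_row m n (A B : 'M[C]_(m, n)) a b :
  (row a A *m adj (row b B)) 0 0 = (A *m adj B) a b.
Proof. by rewrite !mxE; apply: eq_bigr => k _; rewrite !mxE. Qed.

Lemma gram_diag_ge0 m n (T : 'M[C]_(m, n)) i : 0 <= (adj T *m T) i i.
Proof.
by rewrite mxE; apply: sumr_ge0 => k _; rewrite mxE mulrC mul_conjC_ge0.
Qed.

Lemma unitary_row_norm n (F : 'M[C]_n) x :
  F \is unitarymx -> \sum_i `|F x i| ^+ 2 = 1.
Proof.
move=> FU; transitivity ((F *m adj F) x x).
  by rewrite mxE; apply: eq_bigr => i _; rewrite normCK !mxE.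
by rewrite unitary_mulmx_adj // mxE eqxx.
Qed.

Lemma unitary_col_norm n (F : 'M[C]_n) i :
  F \is unitarymx -> \sum_x `|F x i| ^+ 2 = 1.
Proof.
move=> FU; transitivity ((adj F *m F) i i).
  by rewrite mxE; apply: eq_bigr => x _; rewrite normCK !mxE mulrC.
by rewrite unitary_adj_mulmx // mxE eqxx.
Qed.

End Adjoint.

Section SingularValues.
Variable R : realType.
Local Notation C := R[i].

Lemma orthogonal_columns_factor n (P : 'M[C]_n) : exists T Q : 'M[C]_n,
  [/\ Q \is unitarymx, P = T *m Q & forall i k, i != k -> (adj T *m T) i k = 0].
Proof.
set H := adj P *m P.
have /orthomx_spectralP HE : H \is normalmx.
  by apply/normalmxP; rewrite -adjE adjM adjK.
have QU := spectral_unitarymx H.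
set Q := spectralmx H in HE QU; set D := diag_mx (spectral_diag H) in HE.
exists (P *m adj Q), Q; split; first exact: QU.
  by rewrite -mulmxA unitary_adj_mulmx // mulmx1.
have -> : adj (P *m adj Q) *m (P *m adj Q) = D.
  rewrite adjM adjK !mulmxA -[Q *m adj P *m P]mulmxA -/H HE.
  rewrite invmx_unitary // -adjE !mulmxA unitary_mulmx_adj // mul1mx.
  by rewrite -mulmxA unitary_mulmx_adj // mulmx1.
by move=> i k ik; rewrite /D mxE (negbTE ik) mulr0n.
Qed.

Lemma sorted_orthogonal_columns_factor n (P : 'M[C]_n) : exists T Q : 'M[C]_n,
  [/\ Q \is unitarymx, P = T *m Q, forall i k, i != k -> (adj T *m T) i k = 0
    & forall i k : 'I_n, (i <= k)%N ->
        complex.Re ((adj T *m T) k k) <= complex.Re ((adj T *m T) i i)].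
Proof.
have [T [Q [QU PE Torth]]] := orthogonal_columns_factor P.
have [p Tsorted] := sort_perm_nonincr (fun i => complex.Re ((adj T *m T) i i)).
have gramE i k :
    (adj (col_perm p T) *m col_perm p T) i k = (adj T *m T) (p i) (p k).
  have -> : adj (col_perm p T) *m col_perm p T =
            row_perm p (col_perm p (adj T *m T)).
    by rewrite !col_permE row_permE adjM adj_perm_mx invgK !mulmxA.
  by rewrite 2!mxE.
exists (col_perm p T), (row_perm p Q); split.
- by rewrite row_permE; apply: mul_unitarymx; [apply: perm_mx_unitary|].
- rewrite col_permE row_permE mulmxA -[_ *m perm_mx p]mulmxA.
  by rewrite -perm_mxM mulVg perm_mx1 mulmx1.
- by move=> i k ik; rewrite gramE Torth // (inj_eq perm_inj).
- by move=> i k ik; rewrite !gramE; apply: Tsorted.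
Qed.

Lemma schmidt_mul_adj_lower n (N : 'M[C]_n) (i l : 'I_n) :
  (i < l)%N -> (N *m adj (schmidt N)) i l = 0.
Proof.
move=> lt_il; set S := schmidt N.
have SU : S \is unitarymx by apply: schmidt_unitarymx.
have -> : (N *m adj S) i l = (row i N *m adj S) 0 l by rewrite -row_mul !mxE.
have /sub_sums_genmxP [u_ ->] := row_schmidt_sub N i.
rewrite mulmx_suml summxE big1 // => k le_ki.
rewrite -mulmxA -row_mul unitary_mulmx_adj // mxE big_ord1 !mxE.
suff /negbTE -> : k != l by rewrite mulr0.
by apply: contraTneq le_ki => ->; rewrite -ltnNge.
Qed.

Lemma schmidt_orthonormal_prefix n (N : 'M[C]_n) (pos : pred 'I_n) :
  (forall i l : 'I_n, (l <= i)%N -> pos i -> pos l) ->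
  (forall i l, pos i -> pos l -> (N *m adj N) i l = (i == l)%:R) ->
  forall i, pos i -> row i (schmidt N) = row i N.
Proof.
move=> pos_prefix N_orthonormal.
set S := schmidt N; set K := N *m adj S.
have SU : S \is unitarymx by apply: schmidt_unitarymx.
have NE : N = K *m S by rewrite /K -mulmxA unitary_adj_mulmx // mulmx1.
have gramE : N *m adj N = K *m adj K.
  by rewrite NE adjM mulmxA -(mulmxA K) unitary_mulmx_adj // mulmx1.
have Kii_ge0 i : 0 <= K i i.
  by have := form1_row_schmidt N i; rewrite dotmxE -adjE mulmx_adj_row.
(* N = K S with K lower triangular; on the orthonormal prefix the rows of K
   are unit vectors with nonnegative diagonal entry, hence rows of 1. *)
suff fixed m (i : 'I_n) : (i < m)%N -> pos i -> row i S = row i N.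
  by move=> i; apply: (fixed i.+1 i).
elim: m i => [//|m IH] i lt_im pos_i.
have Kil0 l : l != i -> K i l = 0.
  case: (ltnP l i) => [lt_li|le_il] li.
    have pos_l : pos l by apply: pos_prefix pos_i; apply: ltnW.
    rewrite /K -mulmx_adj_row (IH l) ?(leq_trans lt_li) //.
    by rewrite mulmx_adj_row N_orthonormal // eq_sym (negbTE li).
  by apply: schmidt_mul_adj_lower; rewrite ltn_neqAle le_il eq_sym andbT.
have rowE : row i N = K i i *: row i S.
  rewrite NE row_mul mulmx_sum_row (bigD1 i) //= big1 ?addr0 ?mxE // => l li.
  by rewrite mxE Kil0 // scale0r.
have Kii1 : K i i = 1.
  have := N_orthonormal i i pos_i pos_i; rewrite eqxx gramE mxE (bigD1 i) //=.
  rewrite big1 ?addr0 => [|l li]; last by rewrite Kil0 ?mul0r.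
  rewrite [adj K _ _]mxE conjcE (conj_Creal (ger0_real (Kii_ge0 i))) -expr2 => /eqP.
  by rewrite sqrp_eq1 // => /eqP.
by rewrite rowE Kii1 scale1r.
Qed.

Definition colnorm m n (T : 'M[C]_(m, n)) (i : 'I_n) : R :=
  Num.sqrt (complex.Re ((adj T *m T) i i)).

Lemma gram_diagE m n (T : 'M[C]_(m, n)) i : (adj T *m T) i i = (colnorm T i ^+ 2)%:C.
Proof.
have ge0 := gram_diag_ge0 T i.
have reE : (complex.Re ((adj T *m T) i i))%:C = (adj T *m T) i i.
  exact: RRe_real (ger0_real ge0).
by rewrite sqr_sqrtr ?reE // -ler0c reE.
Qed.

Lemma colnorm_eq0 m n (T : 'M[C]_(m, n)) i : colnorm T i = 0 -> forall k, T k i = 0.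
Proof.
move=> Ti0 k; have := gram_diagE T i; rewrite Ti0 expr0n rmorph0 mxE.
have ge0 l : true -> 0 <= adj T i l * T l i by rewrite mxE mulrC conjcE mul_conjC_ge0.
move=> /(psumr_eq0P ge0)/(_ k isT); rewrite mxE conjcE => /eqP.
by rewrite mulf_eq0 conjC_eq0 orbb => /eqP.
Qed.

Definition normalized_adj n (T : 'M[C]_n) : 'M[C]_n :=
  \matrix_(i, k) if 0 < colnorm T i then (T k i)^* / (colnorm T i)%:C else 0.

Section OrthogonalColumns.
Variables (n : nat) (T : 'M[C]_n).
Hypothesis T_orth : forall i k, i != k -> (adj T *m T) i k = 0.
Hypothesis T_sorted : forall i k : 'I_n, (i <= k)%N ->
  complex.Re ((adj T *m T) k k) <= complex.Re ((adj T *m T) i i).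

Lemma normalized_adj_orthonormal i l : 0 < colnorm T i -> 0 < colnorm T l ->
  (normalized_adj T *m adj (normalized_adj T)) i l = (i == l)%:R.
Proof.
move=> gt0_i gt0_l.
transitivity ((adj T *m T) i l / ((colnorm T i)%:C * (colnorm T l)%:C)).
  rewrite !mxE mulr_suml; apply: eq_bigr => k _; rewrite !mxE gt0_i gt0_l !conjcE.
  by rewrite rmorphM fmorphV /= conjCK conj_realc invfM; ring.
case: (eqVneq i l) => [<- | il]; last by rewrite T_orth // mul0r.
by rewrite gram_diagE expr2 rmorphM divff // mulf_neq0 // lt0r_neq0 // ltcR.
Qed.

Lemma colnorm_nonincr (i k : 'I_n) : (i <= k)%N -> colnorm T k <= colnorm T i.
Proof. by move=> ik; apply: ler_wsqrtr; apply: T_sorted. Qed.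

(* The sorting makes the nonzero columns of T a prefix, on which Gram-Schmidt
   keeps the normalised columns unchanged. *)
Lemma orthogonal_columns_svd :
  T = adj (schmidt (normalized_adj T)) *m diag_mx (\row_i (colnorm T i)%:C).
Proof.
set N := normalized_adj T.
have rowNE : forall i, 0 < colnorm T i -> row i (schmidt N) = row i N.
  apply: (@schmidt_orthonormal_prefix _ N (fun i => 0 < colnorm T i)) => [i l li|].
    by move=> /lt_le_trans; apply; apply: colnorm_nonincr.
  exact: normalized_adj_orthonormal.
apply/matrixP => k i; rewrite mul_mx_diag !mxE conjcE.
case: (ltP 0 (colnorm T i)) => [gt0_i | le0_i].
  have := congr1 (fun r : 'rV[C]_n => r 0 k) (rowNE i gt0_i); rewrite !mxE => ->.
  rewrite gt0_i rmorphM fmorphV /= conjCK conj_realc mulfVK //.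
  by rewrite lt0r_neq0 // ltcR.
have Ti0 : colnorm T i = 0 by apply/eqP; rewrite eq_le le0_i sqrtr_ge0.
by rewrite Ti0 rmorph0 mulr0 (colnorm_eq0 Ti0).
Qed.

End OrthogonalColumns.

Lemma is_svd_exists n (P : 'M[C]_n) : exists s, is_svd P s.
Proof.
have [T [Q [QU PE T_orth T_sorted]]] := sorted_orthogonal_columns_factor P.
exists (colnorm T); split; first by move=> i; apply: sqrtr_ge0.
split; first exact: colnorm_nonincr.
exists (adj (schmidt (normalized_adj T))), Q; split; last split.
- by apply/unitaryP; rewrite adj_unitarymx schmidt_unitarymx.
- exact/unitaryP.
- by rewrite PE; congr (_ *m _); apply: orthogonal_columns_svd.
Qed.

Lemma singvals_svd n (P : 'M[C]_n) : is_svd P (singvals P).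
Proof. by rewrite /singvals; apply: epsilon_spec; apply: is_svd_exists. Qed.

Lemma kyfan_mono n (a b : nat) (P : 'M[C]_n) : (a <= b)%N -> kyfan a P <= kyfan b P.
Proof.
move=> le_ab; have [sv_ge0 _] := singvals_svd P.
rewrite /kyfan [X in X <= _]big_mkcond [X in _ <= X]big_mkcond /=.
apply: ler_sum => i _; case: ifP => [lt_ia|_]; first by rewrite (leq_trans lt_ia le_ab).
by case: ifP.
Qed.

Lemma trnorm_mxtrace n (A : 'M[C]_n) :
  exists2 M : 'M[C]_n, M \is unitarymx & \tr (M *m A) = (trnorm A)%:C.
Proof.
have [_ [_ [U [W [/unitaryP UU [/unitaryP WU AE]]]]]] := singvals_svd A.
exists (adj W *m adj U); first by apply: mul_unitarymx; rewrite adj_unitarymx.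
rewrite {1}AE -!mulmxA [adj U *m _]mulmxA unitary_adj_mulmx // mul1mx mxtrace_mulC.
rewrite -mulmxA unitary_mulmx_adj // mulmx1 mxtrace_diag /trnorm /kyfan rmorph_sum.
by rewrite [RHS]big_mkcond; apply: eq_bigr => i _; rewrite ltn_ord mxE.
Qed.

End SingularValues.

Section Modes.
Variables (R : realType) (d : nat).
Local Notation C := R[i].

Definition eigLAB (k : 'I_(d * d)) : nat :=
  ((mxtens_unindex k).1 + (mxtens_unindex k).2)%N.

Lemma eigLAB_index (a b : 'I_d) : eigLAB (mxtens_index (a, b)) = (a + b)%N.
Proof. by rewrite /eigLAB mxtens_indexK. Qed.

Lemma eigLAB_lt k : (eigLAB k < 2 * d)%N.
Proof.
rewrite /eigLAB; case: (mxtens_unindex k) => a b /=.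
by rewrite mul2n -addnn (leq_add (ltn_ord a) (ltnW (ltn_ord b))).
Qed.

Lemma LAB_diag : LAB R d = diag_mx (\row_k (eigLAB k)%:R).
Proof.
apply/matrixP=> k l; rewrite -[k]mxtens_unindexK -[l]mxtens_unindexK.
case: (mxtens_unindex k) => a b; case: (mxtens_unindex l) => a' b'.
rewrite [LHS]mxE !tensmxE !mxE eigLAB_index.
rewrite (inj_eq (can_inj (@mxtens_indexK d d))) xpair_eqE.
by case: (a == a'); case: (b == b');
  rewrite /= ?mulr1n ?mulr0n ?mulr1 ?mul1r ?mulr0 ?mul0r ?addr0 ?add0r ?natrD.
Qed.

Lemma commute_LAB_eigLAB (V : 'M[C]_(d * d)) x y :
  V *m LAB R d = LAB R d *m V -> V x y != 0 -> eigLAB x = eigLAB y.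
Proof.
rewrite LAB_diag mul_mx_diag mul_diag_mx => /matrixP/(_ x y) + Vxy.
rewrite !mxE => /eqP; rewrite mulrC -subr_eq0 -mulrBl mulf_eq0 (negbTE Vxy) orbF.
by rewrite subr_eq0 eqr_nat => /eqP.
Qed.

Lemma mode2E j (X : 'M[C]_(d * d)) x y :
  mode2 j X x y = if (eigLAB x)%:Z == (eigLAB y)%:Z + j then X x y else 0.
Proof.
rewrite /mode2 summxE (bigD1 (Ordinal (eigLAB_lt y))) //= big1 ?addr0.
  rewrite /PiAB mul_mx_diag mul_diag_mx !mxE -/(eigLAB x) -/(eigLAB y) eqxx mulr1.
  by case: ifP; rewrite ?mul1r ?mul0r.
move=> c cy; rewrite /PiAB mul_mx_diag mul_diag_mx !mxE -/(eigLAB y).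
suff /negbTE -> : (eigLAB y)%:Z != c%:Z by rewrite mulr0.
by apply: contra cy => /eqP [] eq_yc; apply/eqP/val_inj; rewrite /= eq_yc.
Qed.

(* [V] is block diagonal in the eigenbasis of L_AB, so only the entries of [X]
   between eigenvalues differing by [j] contribute. *)
Lemma conj_mode2_entry j (V X : 'M[C]_(d * d)) x y :
  V *m LAB R d = LAB R d *m V -> (eigLAB x)%:Z = (eigLAB y)%:Z + j ->
  (V *m X *m adj V) x y = (V *m mode2 j X *m adj V) x y.
Proof.
move=> VL xy; rewrite !mxE; apply: eq_bigr => t _; rewrite !mxE.
have [->|Vyt] := eqVneq (V y t) 0; first by rewrite conjcE conjC0 !mulr0.
congr (_ * _); apply: eq_bigr => s _.
have [->|Vxs] := eqVneq (V x s) 0; first by rewrite !mul0r.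
by rewrite mode2E -(commute_LAB_eigLAB VL Vxs) -(commute_LAB_eigLAB VL Vyt) xy eqxx.
Qed.

End Modes.

Section ModePairs.
Variables (R : realType) (d : nat) (j : int).
Local Notation C := R[i].

(* [((n', m'), (n, m))] encodes the matrix unit |n', m'><n, m| of V_in^(j). *)
Definition mode_pair : pred (('I_d * 'I_d) * ('I_d * 'I_d)) :=
  fun p => (p.1.2 == p.2.2) && (p.1.1%:Z == p.2.1%:Z + j).

Lemma mode_pair_eigLAB p : mode_pair p ->
  (eigLAB (mxtens_index p.1))%:Z = (eigLAB (mxtens_index p.2))%:Z + j.
Proof.
case: p => [[a k] [b k']] /andP [/eqP /= -> /eqP /= ab].
by rewrite !eigLAB_index !PoszD ab addrAC.
Qed.

Lemma mode_pair_inj1 : {in mode_pair &, injective (fun p => mxtens_index p.1)}.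
Proof.
move=> [[a k] [b k']] [[a2 k2] [b2 k2']].
rewrite !unfold_in /mode_pair /= => /andP [/eqP e1 /eqP e2] /andP [/eqP e3 /eqP e4].
move=> /(can_inj (@mxtens_indexK d d)) [ea ek].
have eb : (b : nat) = b2.
  by apply/eqP; rewrite -eqz_nat; apply/eqP; apply: (addIr j); rewrite -e2 -e4 ea.
by rewrite -e1 -e3 ea ek (ord_inj eb).
Qed.

Lemma mode_pair_inj2 : {in mode_pair &, injective (fun p => mxtens_index p.2)}.
Proof.
move=> [[a k] [b k']] [[a2 k2] [b2 k2']].
rewrite !unfold_in /mode_pair /= => /andP [/eqP e1 /eqP e2] /andP [/eqP e3 /eqP e4].
move=> /(can_inj (@mxtens_indexK d d)) [eb ek].
have ea : (a : nat) = a2 by apply/eqP; rewrite -eqz_nat e2 e4 eb.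
by rewrite e1 e3 eb ek (ord_inj ea).
Qed.

Lemma mxtrace_mul_mode1_ptrB (M : 'M[C]_d) (Z : 'M[C]_(d * d)) :
  \tr (M *m mode1 j (ptrB Z)) =
  \sum_(p | mode_pair p) M p.2.1 p.1.1 * Z (mxtens_index p.1) (mxtens_index p.2).
Proof.
pose F (a b k k' : 'I_d) := if (k == k') && (a%:Z == b%:Z + j)
  then M b a * Z (mxtens_index (a, k)) (mxtens_index (b, k')) else 0.
have sum_pairE :
    \sum_(p | mode_pair p) M p.2.1 p.1.1 * Z (mxtens_index p.1) (mxtens_index p.2)
    = \sum_a \sum_k \sum_b \sum_k' F a b k k'.
  transitivity (\sum_(p1 : 'I_d * 'I_d) \sum_(p2 : 'I_d * 'I_d) F p1.1 p2.1 p1.2 p2.2).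
    by rewrite big_mkcond [RHS]pair_big /=; apply: eq_bigr => [[[a k] [b k']]] _.
  rewrite [RHS]pair_big /=; apply: eq_bigr => [[a k]] _ /=.
  by rewrite [RHS]pair_big /=; apply: eq_bigr => [[b k']] _.
have sum_k'E a b k : \sum_k' F a b k k' =
    if a%:Z == b%:Z + j
    then M b a * Z (mxtens_index (a, k)) (mxtens_index (b, k)) else 0.
  rewrite (bigD1 k) //= big1 ?addr0; first by rewrite /F eqxx.
  by move=> k' kk'; rewrite /F eq_sym (negbTE kk').
rewrite sum_pairE /mxtrace.
under eq_bigr => b _ do rewrite mxE.
rewrite exchange_big /=; apply: eq_bigr => a _.
rewrite [RHS]exchange_big /=; apply: eq_bigr => b _.
under [RHS]eq_bigr => k _ do rewrite sum_k'E.
rewrite !mxE; case: ifP => _; first by rewrite mulr_sumr.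
by rewrite mulr0 big1.
Qed.

End ModePairs.

Lemma card_mode_pair_le_dj (R : realType) d j : (#|@mode_pair d j| <= dj R d j)%N.
Proof.
rewrite /dj; under eq_bigr => ab _ do rewrite mxvec_delta.
apply: mxrank_sum_delta_ge => p q _ _ /cast_ord_inj /enum_rank_inj pq.
move: (congr1 fst pq) (congr1 snd pq) => /= /(can_inj (@mxtens_indexK d d)) e1.
move=> /(can_inj (@mxtens_indexK d d)) e2.
by case: p q {pq} e1 e2 => [? ?] [? ?] /= -> ->.
Qed.

Section MainBound.
Variables (R : realType) (d : nat) (j : int).
Local Notation C := R[i].
Local Notation P := (@mode_pair d j).
Local Notation u p := (mxtens_index p.1).
Local Notation w p := (mxtens_index p.2).

Variables (V X U W : 'M[C]_(d * d)) (s : 'I_(d * d) -> R).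
Hypotheses (VU : V \is unitarymx) (VL : V *m LAB R d = LAB R d *m V).
Hypotheses (UU : U \is unitarymx) (WU : W \is unitarymx).
Hypothesis s_ge0 : forall i, 0 <= s i.
Hypothesis s_nonincr : forall i k : 'I_(d * d), (i <= k)%N -> s k <= s i.
Hypothesis XE : mode2 j X = U *m diag_mx (\row_i (s i)%:C) *m W.

Let F := V *m U.
Let G := W *m adj V.

Let FU : F \is unitarymx := mul_unitarymx VU UU.

Let GU : G \is unitarymx.
Proof. by apply: mul_unitarymx WU _; rewrite adj_unitarymx. Qed.

Lemma conj_entry_mode_pair p : P p ->
  (V *m X *m adj V) (u p) (w p) = \sum_i F (u p) i * (s i)%:C * G i (w p).
Proof.
move=> Pp; rewrite (conj_mode2_entry _ VL (mode_pair_eigLAB Pp)) XE.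
have -> : V *m (U *m diag_mx (\row_i (s i)%:C) *m W) *m adj V =
          F *m diag_mx (\row_i (s i)%:C) *m G by rewrite !mulmxA.
rewrite mxE; apply: eq_bigr => i _.
by rewrite mul_mx_diag mxE [_ 0 i]mxE.
Qed.

Definition mode_weight i :=
  \sum_(p | P p) (`|F (u p) i| ^+ 2 + `|G i (w p)| ^+ 2) / 2%:R.

Lemma mode_weight_ge0 i : 0 <= mode_weight i.
Proof.
by apply: sumr_ge0 => p _; rewrite divr_ge0 ?ler0n // addr_ge0 // exprn_ge0.
Qed.

Lemma mode_weight_le1 i : mode_weight i <= 1.
Proof.
rewrite /mode_weight -mulr_suml big_split /= ler_pdivrMr ?ltr0n // mul1r.
rewrite -[2%:R]/(1 + 1 : C) lerD //.
  rewrite -(unitary_col_norm i FU).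
  apply: (sum_in_inj_le (f := fun x => `|F x i| ^+ 2) (@mode_pair_inj1 d j)).
  by move=> x; apply: exprn_ge0.
rewrite -(unitary_row_norm i GU).
apply: (sum_in_inj_le (f := fun x => `|G i x| ^+ 2) (@mode_pair_inj2 d j)).
by move=> x; apply: exprn_ge0.
Qed.

Lemma sum_mode_weight : \sum_i mode_weight i = #|P|%:R.
Proof.
rewrite /mode_weight exchange_big /=.
under eq_bigr => p _ do rewrite -mulr_suml big_split /=
  (unitary_row_norm (u p) FU) (unitary_col_norm (w p) GU).
rewrite -[1 + 1]/(2%:R : C) divff ?pnatr_eq0 // sumr_const.
by rewrite (@eq_card _ _ (mem P)).
Qed.

Lemma abs_mxtrace_mode1_le (M : 'M[C]_d) : M \is unitarymx ->
  `|\tr (M *m mode1 j (ptrB (V *m X *m adj V)))| <=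
  \sum_i (s i)%:C * mode_weight i.
Proof.
move=> MU; rewrite mxtrace_mul_mode1_ptrB.
rewrite (eq_bigr (fun p => M p.2.1 p.1.1 * \sum_i F (u p) i * (s i)%:C * G i (w p)));
  last by move=> p Pp; rewrite conj_entry_mode_pair.
have sC_ge0 i : 0 <= (s i)%:C :> C by rewrite ler0c.
have M_le1 a b : `|M a b| <= 1.
  rewrite -(@expr_le1 _ 2) // -(unitary_row_norm a MU) (bigD1 b) //= lerDl.
  by apply: sumr_ge0 => c _; apply: exprn_ge0.
apply: le_trans (ler_norm_sum _ _ _) _.
apply: le_trans
  (_ : _ <= \sum_(p | P p) \sum_i (s i)%:C * (`|F (u p) i| * `|G i (w p)|)) _.
  apply: ler_sum => p Pp; rewrite normrM.
  apply: le_trans (ler_wpM2r (normr_ge0 _) (M_le1 _ _)) _; rewrite mul1r.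
  apply: le_trans (ler_norm_sum _ _ _) _; apply: ler_sum => i _.
  by rewrite !normrM (ger0_norm (sC_ge0 i)) mulrAC mulrC.
rewrite exchange_big /=; apply: ler_sum => i _; rewrite /mode_weight mulr_sumr.
apply: ler_sum => p _; apply: ler_wpM2l; first exact: sC_ge0.
by rewrite -normrM normM_le_mean_sqr.
Qed.

Lemma abs_mxtrace_mode1_le_prefix (M : 'M[C]_d) : M \is unitarymx ->
  `|\tr (M *m mode1 j (ptrB (V *m X *m adj V)))| <=
  (\sum_(i < d * d | (i < #|P|)%N) s i)%:C.
Proof.
move=> MU; apply: le_trans (abs_mxtrace_mode1_le MU) _; rewrite rmorph_sum.
apply: sum_weighted_le_sum_prefix => [i | i k ik | i | i |].
- by rewrite ler0c.
- by rewrite lecR s_nonincr.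
- exact: mode_weight_ge0.
- exact: mode_weight_le1.
- by rewrite sum_mode_weight.
Qed.

End MainBound.

Lemma trnorm_mode1_ptrB_le (R : realType) d j (X V : 'M[R[i]]_(d * d)) :
  V \is unitarymx -> V *m LAB R d = LAB R d *m V ->
  trnorm (mode1 j (ptrB (V *m X *m adj V))) <= kyfan (dj R d j) (mode2 j X).
Proof.
move=> VU VL; set A := mode1 j _.
have [M MU trE] := trnorm_mxtrace A.
have [s_ge0 [s_nonincr [U [W [/unitaryP UU [/unitaryP WU XE]]]]]] :=
  singvals_svd (mode2 j X).
apply: le_trans (kyfan_mono _ (card_mode_pair_le_dj R d j)).
have tr_ge0 : 0 <= \tr (M *m A).
  have [sA_ge0 _] := singvals_svd A.
  by rewrite trE ler0c; apply: sumr_ge0 => i _; apply: sA_ge0.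
rewrite -lecR -trE -(ger0_norm tr_ge0).
exact: (abs_mxtrace_mode1_le_prefix VU VL UU WU s_ge0 s_nonincr XE MU).
Qed.

Theorem mainTheorem5 (R : realType) (d : nat) (rho : 'M[R[i]]_d) (j : int) :
  is_state rho -> j != 0 ->
  DeltaMA j rho <= kyfan (dj R d j) (mode2 j (rho *t rho)) - trnorm (mode1 j rho).
Proof.
(* the bound holds for every operator [rho] and every [j] *)
move=> _ _; rewrite /DeltaMA /Mj lerD2r; apply: ge_sup.
  exists (trnorm (mode1 j (ptrB (1%:M *m (rho *t rho) *m adj 1%:M)))), 1%:M.
  by split; [apply/unitaryP/unitarymx1 | rewrite mulmx1 mul1mx].
by move=> _ [V [/unitaryP VU [VL ->]]]; apply: trnorm_mode1_ptrB_le.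
Qed.
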